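(* Let $D$ and $V$ be one-dimensional Noetherian local integral domains with common quotient field $L$, and set $R=D\cap V$. Suppose: (a) $V$ is a discrete rank one valuation ring of $L$; (b) there is a prime element $\pi$ of $V$ that is also a prime element of $R$; (c) for every maximal ideal $N$ of the integral closure $\overline D$ of $D$, the valuation ring $\overline D_N$ is independent of $V$; (d) $D$ is not a unique factorization domain; (e) there are at least two non-associated irreducible elements of $D$ that are also irreducible in $R$. Then $R$ is a one-dimensional Noetherian integral domain (in particular atomic) with exactly two maximal ideals, $\pi$ is, up to associates in $R$, the unique prime element of $R$, $R$ has irreducible elements not associated to $\pi$, and none of these is absolutely irreducible.
   Context: Two valuation rings $V_1,V_2$ of a field $L$ are independent if the only valuation ring of $L$ containing both $V_1$ and $V_2$ is $L$ itself. Factorization notions for a domain refer to its monoid of non-zero elements. Two factorizations into irreducibles $a_1\cdots a_n=b_1\cdots b_m$ of the same element are essentially the same if $n=m$ and, after re-indexing, $a_j$ and $b_j$ are associated for all $j$. An irreducible $r$ is absolutely irreducible if for every $n\in\mathbb N$, every factorization of $r^n$ into irreducibles is essentially the same as $r^n=r\cdots r$. *)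

From HB Require Import structures.
From mathcomp Require Import all_boot all_order all_algebra.
Set Implicit Arguments. Unset Strict Implicit. Unset Printing Implicit Defensive.
Import Order.TTheory GRing.Theory Num.Theory.
Local Open Scope ring_scope.

(* Subsets of a field L are represented as predicates [L -> Prop].
   All rings considered are subrings of the fixed field L (hence domains). *)

Section Defs.
Variable L : fieldType.
Implicit Types (A I J P M N W : L -> Prop) (x y a b : L).

Definition subring A : Prop :=
  [/\ A 0, A 1, (forall x y, A x -> A y -> A (x - y)) &
      (forall x y, A x -> A y -> A (x * y))].

Definition quotient_field_is A : Prop :=
  forall x, exists a b, [/\ A a, A b, b != 0 & x = a / b].

Definition ideal A I : Prop :=
  [/\ (forall x, I x -> A x), I 0, (forall x y, I x -> I y -> I (x + y)) &
      (forall r x, A r -> I x -> I (r * x))].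

Definition proper_ideal A I : Prop := ideal A I /\ ~ I 1.

Definition prime_ideal A P : Prop :=
  proper_ideal A P /\ forall a b, A a -> A b -> P (a * b) -> P a \/ P b.

Definition maximal_ideal A M : Prop :=
  proper_ideal A M /\
  forall J, proper_ideal A J -> (forall x, M x -> J x) -> forall x, J x -> M x.

Definition same_set (I J : L -> Prop) : Prop := forall x, I x <-> J x.

Definition generated_by A (s : seq L) (I : L -> Prop) : Prop :=
  forall x, I x <-> exists c : seq L,
    [/\ size c = size s, (forall i, (i < size c)%N -> A c`_i) &
        x = \sum_(i < size s) c`_i * s`_i].

Definition noetherian A : Prop :=
  forall I, ideal A I -> exists s : seq L,
    (forall i, (i < size s)%N -> A s`_i) /\ generated_by A s I.

Definition local_ring A : Prop :=
  exists M, maximal_ideal A M /\ forall M', maximal_ideal A M' -> same_set M' M.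

Definition dim_one A : Prop :=
  (exists P, prime_ideal A P /\ exists x, P x /\ x != 0) /\
  (forall P, prime_ideal A P -> (exists x, P x /\ x != 0) -> maximal_ideal A P).

Definition valuation_ring W : Prop :=
  subring W /\ forall x, x != 0 -> W x \/ W x^-1.

Definition DVR_of V : Prop :=
  exists v : L -> int,
  [/\ (forall x y, x != 0 -> y != 0 -> v (x * y) = v x + v y),
      (forall x y, x != 0 -> y != 0 -> x + y != 0 ->
                   Num.min (v x) (v y) <= v (x + y)),
      (forall n : int, exists x, x != 0 /\ v x = n) &
      (forall x, V x <-> (x = 0 \/ (x != 0 /\ 0 <= v x)))].

Definition independent V1 V2 : Prop :=
  forall W, valuation_ring W -> (forall x, V1 x -> W x) ->
            (forall x, V2 x -> W x) -> forall x, W x.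

Definition int_closure A : L -> Prop :=
  fun x => exists p : {poly L}, [/\ p \is monic, (forall i, A p`_i) & root p x].

Definition localization A N : L -> Prop :=
  fun x => exists a b, [/\ A a, A b, ~ N b & x = a / b].

Definition unit_in A x : Prop := [/\ A x, x != 0 & A x^-1].

Definition assoc_in A x y : Prop := exists u, unit_in A u /\ x = u * y.

Definition divides_in A a b : Prop := exists c, A c /\ b = a * c.

Definition prime_elt A p : Prop :=
  [/\ A p, p != 0, ~ unit_in A p &
      forall a b, A a -> A b -> divides_in A p (a * b) ->
                  divides_in A p a \/ divides_in A p b].

Definition irreducible_in A r : Prop :=
  [/\ A r, r != 0, ~ unit_in A r &
      forall a b, A a -> A b -> r = a * b -> unit_in A a \/ unit_in A b].

Definition factorization A (s : seq L) x : Prop :=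
  (forall i, (i < size s)%N -> irreducible_in A s`_i) /\ \prod_(y <- s) y = x.

Definition ess_same A (s t : seq L) : Prop :=
  size s = size t /\
  exists t' : seq L, perm_eq t t' /\
    forall i, (i < size s)%N -> assoc_in A s`_i t'`_i.

Definition atomic A : Prop :=
  forall x, A x -> x != 0 -> ~ unit_in A x -> exists s, factorization A s x.

Definition UFD A : Prop :=
  atomic A /\
  forall s t x, factorization A s x -> factorization A t x -> ess_same A s t.

Definition abs_irreducible A r : Prop :=
  irreducible_in A r /\
  forall (n : nat) (s : seq L), factorization A s (r ^+ n) -> ess_same A s (nseq n r).

Definition capS (D V : L -> Prop) : L -> Prop := fun x => D x /\ V x.

End Defs.

(* Since D is not a UFD, its maximal ideal M is not principal.  This forces D to
   leave V, and then pi to lie outside M: pi is a unit of D, so D = R[1/pi], and every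
   element of V is a fraction of elements of R with denominator of valuation 0.  Hence
   every proper ideal of R lies in M ∩ R or in pi V ∩ R, the two maximal ideals, and R
   is Noetherian: an ideal I is generated by an element of minimal valuation together
   with pi-multiples of generators of I D.  A prime p of R generates a maximal ideal;
   p R = M ∩ R would make M principal, so p R = pi V ∩ R and p ~ pi.  An irreducible r
   not associated to pi has valuation 0 and lies in M, the radical of every nonzero
   principal ideal of D.  If r were absolutely irreducible, every divisor of a power
   of r would be a unit times a power of r, hence so would every element of D, and
   M = r D would again make D a UFD. *)

From HB Require Import structures.
From mathcomp Require Import all_boot all_order all_algebra.
From Stdlib Require Import Classical ClassicalEpsilon.
From mathcomp Require Import zify ring.
Import Order.TTheory GRing.Theory Num.Theory.
Local Open Scope ring_scope.
Set Implicit Arguments. Unset Strict Implicit.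

Section SubringTheory.
Variables (L : fieldType) (A : L -> Prop).
Hypothesis sA : subring A.
Implicit Types (x y u : L).

Lemma subring0 : A 0. Proof. by case: sA. Qed.
Lemma subring1 : A 1. Proof. by case: sA. Qed.
Lemma subringB x y : A x -> A y -> A (x - y). Proof. by case: sA => _ _ + _; apply. Qed.
Lemma subringM x y : A x -> A y -> A (x * y). Proof. by case: sA => _ _ _; apply. Qed.

Lemma subringN x : A x -> A (- x).
Proof. by rewrite -sub0r; apply: subringB subring0. Qed.

Lemma subringD x y : A x -> A y -> A (x + y).
Proof. by move=> hx hy; rewrite -[y]opprK; apply/subringB/subringN. Qed.

Lemma subringX x n : A x -> A (x ^+ n).
Proof.
move=> hx; elim: n => [|n IH]; first by rewrite expr0; apply: subring1.
by rewrite exprS; apply: subringM.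
Qed.

Lemma unit_in1 : unit_in A 1.
Proof. by split; rewrite ?invr1 ?oner_neq0 //; apply: subring1. Qed.

Lemma unit_inM x y : unit_in A x -> unit_in A y -> unit_in A (x * y).
Proof.
by case=> hx hx0 hxV [hy hy0 hyV]; split; rewrite ?mulf_neq0 ?invfM //; apply: subringM.
Qed.

Lemma unit_inX x n : unit_in A x -> unit_in A (x ^+ n).
Proof.
move=> hx; elim: n => [|n IH]; first by rewrite expr0; apply: unit_in1.
by rewrite exprS; apply: unit_inM.
Qed.

Lemma assoc_in_refl x : assoc_in A x x.
Proof. by exists 1; split; [apply: unit_in1 | rewrite mul1r]. Qed.

Lemma assoc_in_trans x y z : assoc_in A x y -> assoc_in A y z -> assoc_in A x z.
Proof.
by case=> u [hu ->] [w [hw ->]]; exists (u * w); rewrite mulrA; split=> //; apply: unit_inM.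
Qed.

End SubringTheory.

Section Units.
Variables (L : fieldType) (A : L -> Prop).
Implicit Types (x y : L).

Lemma unit_inV x : unit_in A x -> unit_in A x^-1.
Proof. by case=> h1 h2 h3; split; rewrite ?invrK ?invr_eq0. Qed.

Lemma unit_in_mul1 x y : A x -> A y -> x * y = 1 -> unit_in A x.
Proof.
move=> hx hy e; have hx0 : x != 0 by apply: contra_eq_neq e => ->; rewrite mul0r eq_sym oner_neq0.
by split=> //; rewrite (_ : x^-1 = y) //; apply: (mulfI hx0); rewrite mulfV.
Qed.

Lemma assoc_in_sym x y : assoc_in A x y -> assoc_in A y x.
Proof.
case=> u [[hu hu0 huV] ->]; exists u^-1; split; first by split; rewrite ?invrK ?invr_eq0.
by rewrite mulKf.
Qed.

Lemma assoc_inW (B : L -> Prop) x y :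
  (forall z, A z -> B z) -> assoc_in A x y -> assoc_in B x y.
Proof. by move=> AB [u [[hu hu0 huV] ->]]; exists u; split=> //; split; auto. Qed.

End Units.

Section IdealTheory.
Variables (L : fieldType) (A I : L -> Prop).
Hypothesis hI : ideal A I.
Implicit Types (x y r u : L).

Lemma ideal_sub x : I x -> A x. Proof. by case: hI => + _ _ _; apply. Qed.
Lemma ideal0 : I 0. Proof. by case: hI. Qed.
Lemma idealD x y : I x -> I y -> I (x + y). Proof. by case: hI => _ _ + _; apply. Qed.
Lemma idealMl r x : A r -> I x -> I (r * x). Proof. by case: hI => _ _ _; apply. Qed.
Lemma idealMr r x : A r -> I x -> I (x * r). Proof. by rewrite mulrC; apply: idealMl. Qed.

Lemma ideal_unit u : unit_in A u -> I u -> I 1.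
Proof. by case=> _ hu0 huV hu; rewrite -(mulVf hu0); apply: idealMl. Qed.

End IdealTheory.

Lemma maximal_ideal_ideal (L : fieldType) (A M : L -> Prop) :
  maximal_ideal A M -> ideal A M.
Proof. by case=> [[]]. Qed.

Lemma maximal_ideal_not1 (L : fieldType) (A M : L -> Prop) :
  maximal_ideal A M -> ~ M 1.
Proof. by case=> [[]]. Qed.

Lemma ideal_self (L : fieldType) (A : L -> Prop) : subring A -> ideal A A.
Proof.
by move=> sA; split=> //; [apply: subring0 | apply: subringD | move=> *; apply: subringM].
Qed.

Lemma maximal_ideal_same (L : fieldType) (A I J : L -> Prop) :
  same_set I J -> maximal_ideal A J -> maximal_ideal A I.
Proof.
move=> IJ [[[hJA hJ0 hJD hJM] hJ1] Jmax]; split.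
  split; last by move/IJ.
  split=> [x /IJ /hJA //|| x y /IJ hx /IJ hy | r x hr /IJ hx]; apply/IJ; auto.
by move=> K hK IK x Kx; apply/IJ; apply: (Jmax K hK) => // y /IJ; apply: IK.
Qed.

Lemma prime_ideal_pow (L : fieldType) (A P : L -> Prop) x n : subring A ->
  prime_ideal A P -> A x -> (0 < n)%N -> P (x ^+ n) -> P x.
Proof.
move=> sA [_ hP] hx; case: n => // n _; elim: n => [|n IH]; first by rewrite expr1.
by rewrite exprS => /(hP _ _ hx (subringX sA _ hx)) [].
Qed.

Definition principal (L : fieldType) (A : L -> Prop) (x : L) : L -> Prop :=
  fun y => exists2 d, A d & y = x * d.

Section Principal.
Variables (L : fieldType) (A : L -> Prop).
Hypothesis sA : subring A.
Implicit Types (x y p : L).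

Lemma principal_ideal x : A x -> ideal A (principal A x).
Proof.
move=> hx; split.
- by move=> y [d hd ->]; apply: subringM.
- by exists 0; [apply: subring0 | rewrite mulr0].
- by move=> y z [d hd ->] [e he ->]; exists (d + e); [apply: subringD | rewrite mulrDr].
- by move=> r y hr [d hd ->]; exists (r * d); [apply: subringM | rewrite mulrCA].
Qed.

Lemma principal_self x : principal A x x.
Proof. by exists 1; [apply: subring1 | rewrite mulr1]. Qed.

Lemma principal_prime p : prime_elt A p -> prime_ideal A (principal A p).
Proof.
case=> hp _ hpu hpr; split; first split; first exact: principal_ideal.
  by case=> d hd e; apply: hpu; apply: (unit_in_mul1 hp hd); rewrite -e.
move=> a b ha hb [c hc e]; have : divides_in A p (a * b) by exists c.
by case/(hpr _ _ ha hb) => [[d [hd ->]]|[d [hd ->]]]; [left|right]; exists d.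
Qed.

End Principal.

Section Span.
Variables (L : fieldType) (A : L -> Prop).
Hypothesis sA : subring A.
Implicit Types (s : seq L) (x y : L).

(* As in [generated_by], but with the coefficients given by a function, which makes
   them easy to combine. *)
Definition span s x : Prop :=
  exists2 f : nat -> L, (forall i, (i < size s)%N -> A (f i)) &
    x = \sum_(i < size s) f i * s`_i.

Lemma generated_by_span s I : generated_by A s I <-> forall x, I x <-> span s x.
Proof.
have span_seq x : span s x <-> exists c : seq L, [/\ size c = size s,
  (forall i, (i < size c)%N -> A c`_i) & x = \sum_(i < size s) c`_i * s`_i].
  split=> [[f hf ->]|[c [hc hcA ->]]]; last by exists (nth 0 c) => // i; rewrite -hc; apply: hcA.
  exists (mkseq f (size s)); rewrite size_mkseq; split=> // [i hi|].
    by rewrite nth_mkseq //; apply: hf.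
  by apply: eq_bigr => i _; rewrite nth_mkseq.
by split=> hI x; split=> [/hI/span_seq | /span_seq/hI].
Qed.

Lemma generated_by_nil I : ideal A I -> (forall x, I x -> x = 0) -> generated_by A [::] I.
Proof.
move=> hI I0; apply/generated_by_span => x; split=> [/I0 ->|[f _ ->]].
  by exists (fun _ => 0) => //; rewrite big_ord0.
by rewrite big_ord0; exact: (ideal0 hI).
Qed.

Lemma span_mem s i : (i < size s)%N -> span s s`_i.
Proof.
move=> hi; exists (fun j => if j == i then 1 else 0) => [j _|].
  by case: eqP => _; [apply: subring1 | apply: subring0].
rewrite (bigD1 (Ordinal hi)) //= eqxx mul1r big1 ?addr0 // => j.
by rewrite -val_eqE /= => /negbTE ->; rewrite mul0r.
Qed.

Lemma spanD s x y : span s x -> span s y -> span s (x + y).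
Proof.
move=> [f hf ->] [g hg ->]; exists (fun i => f i + g i); first by move=> i hi; apply: subringD; auto.
by rewrite -big_split; apply: eq_bigr => i _; rewrite mulrDl.
Qed.

Lemma spanMl s a x : A a -> span s x -> span s (a * x).
Proof.
move=> ha [f hf ->]; exists (fun i => a * f i); first by move=> i hi; apply: subringM; auto.
by rewrite mulr_sumr; apply: eq_bigr => i _; rewrite mulrA.
Qed.

Lemma span_cons s y x : span s x -> span (y :: s) x.
Proof.
move=> [f hf ->]; exists (fun i => if i is j.+1 then f j else 0) => [[|i]|].
- by move=> _; apply: subring0.
- exact: hf.
by rewrite big_ord_recl /= mul0r add0r.
Qed.

Lemma span_ideal I s x : ideal A I -> (forall i, (i < size s)%N -> I s`_i) ->
  span s x -> I x.
Proof.
move=> hI hs [f hf ->]; apply: (big_ind I); first exact: ideal0 hI.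
  exact: idealD hI.
by move=> i _; exact: (idealMl hI (hf _ (ltn_ord i)) (hs _ (ltn_ord i))).
Qed.

End Span.

Lemma common_bound (P : nat -> nat -> Prop) k :
  (forall n m i, (n <= m)%N -> P n i -> P m i) ->
  (forall i, (i < k)%N -> exists n, P n i) -> exists N, forall i, (i < k)%N -> P N i.
Proof.
move=> mono; elim: k => [|k IH] h; first by exists 0%N.
have [N HN] : exists N, forall i, (i < k)%N -> P N i by apply: IH => i /ltnW; apply: h.
have [n Hn] := h k (ltnSn k).
exists (maxn N n) => i; rewrite ltnS leq_eqVlt => /orP [/eqP -> | hi].
  by apply: mono Hn; apply: leq_maxr.
by apply: mono (HN i hi); apply: leq_maxl.
Qed.

Section Factorization.
Variables (L : fieldType) (A : L -> Prop).
Implicit Types (s t : seq L) (x y r : L).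

Lemma factorization_cat s t x y : factorization A s x -> factorization A t y ->
  factorization A (s ++ t) (x * y).
Proof.
move=> [hs <-] [ht <-]; split; last by rewrite big_cat.
move=> i hi; rewrite nth_cat; case: ltnP => his; first exact: hs.
by apply: ht; rewrite -(ltn_add2l (size s)) subnKC // -size_cat.
Qed.

Lemma factorization1 x : irreducible_in A x -> factorization A [:: x] x.
Proof. by move=> h; split; [case | rewrite big_seq1]. Qed.

End Factorization.

Definition ideal_adjoin (L : fieldType) (A I : L -> Prop) (a : L) : L -> Prop :=
  fun x => exists i d, [/\ I i, A d & x = i + a * d].

Section IdealAdjoin.
Variable L : fieldType.
Implicit Types (A I : L -> Prop) (a x : L).

Lemma ideal_adjoin_ideal A I a : subring A -> ideal A I -> A a ->
  ideal A (ideal_adjoin A I a).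
Proof.
move=> sA hI ha; split.
- by move=> x [i [d [hi hd ->]]]; apply: subringD (ideal_sub hI hi) (subringM sA ha hd).
- by exists 0, 0; split; [apply: ideal0 hI | apply: subring0 sA | rewrite mulr0 addr0].
- move=> x y [i [d [hi hd ->]]] [j [e [hj he ->]]]; exists (i + j), (d + e); split.
  + exact: (idealD hI hi hj).
  + exact: subringD.
  + by rewrite mulrDr addrACA.
- move=> q x hq [i [d [hi hd ->]]]; exists (q * i), (q * d); split.
  + exact: (idealMl hI hq hi).
  + exact: subringM.
  + by rewrite mulrDr mulrCA.
Qed.

Lemma ideal_adjoin_sub A I a x : subring A -> I x -> ideal_adjoin A I a x.
Proof. by move=> sA hx; exists x, 0; split; [| apply: subring0 sA | rewrite mulr0 addr0]. Qed.

Lemma ideal_adjoin_mem A I a : subring A -> ideal A I -> ideal_adjoin A I a a.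
Proof.
by move=> sA hI; exists 0, 1; split; [apply: ideal0 hI | apply: subring1 sA | rewrite mulr1 add0r].
Qed.

End IdealAdjoin.

Section Noetherian.
Variables (L : fieldType) (A : L -> Prop).
Hypotheses (sA : subring A) (nA : noetherian A).
Implicit Types (I J : L -> Prop) (x y : L).

Lemma noetherian_stationary (c : nat -> L -> Prop) :
  (forall n, ideal A (c n)) -> (forall n x, c n x -> c n.+1 x) ->
  exists N, forall n x, c n x -> c N x.
Proof.
move=> hc step.
have mono n m x : (n <= m)%N -> c n x -> c m x.
  by move/subnK <-; elim: (m - n)%N => // k IH /IH; apply: step.
pose U x := exists n, c n x.
have hU : ideal A U.
  split.
  - by move=> x [n]; apply: (ideal_sub (hc n)).
  - by exists 0%N; apply: (ideal0 (hc 0%N)).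
  - move=> x y [n hx] [m hy]; exists (maxn n m); apply: (idealD (hc _)).
    + exact: mono (leq_maxl n m) hx.
    + exact: mono (leq_maxr n m) hy.
  - by move=> r x hr [n hx]; exists n; exact: (idealMl (hc n) hr hx).
have [s [_ /generated_by_span hs]] := nA hU.
have [N hN] : exists N, forall i, (i < size s)%N -> c N s`_i.
  apply: (@common_bound (fun n i => c n s`_i)) => [n m i|i hi]; first exact: mono.
  by apply/hs; exact: (span_mem sA hi).
by exists N => n x hx; apply: (span_ideal (hc N) hN); apply/hs; exists n.
Qed.

Lemma noetherian_maximal (F : (L -> Prop) -> Prop) :
  (forall I, F I -> ideal A I) -> (exists I, F I) ->
  exists2 I, F I & forall J, F J -> (forall x, I x -> J x) -> forall x, J x -> I x.
Proof.
move=> hF [I0 FI0]; apply: NNPP => nomax.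
have /choice [g hg] : forall I, exists J, F I ->
    [/\ F J, forall x, I x -> J x & exists y, J y /\ ~ I y].
  move=> I; case: (classic (F I)) => FI; last by exists I.
  apply: NNPP => hI; apply: nomax; exists I => // J FJ IJ x Jx.
  by apply: NNPP => nIx; apply: hI; exists J => _; split=> //; exists x.
pose c n := iter n g I0.
have Fc n : F (c n) by elim: n => //= n /hg [].
have [N hN] := noetherian_stationary (fun n => hF _ (Fc n))
  (fun n => let: And3 _ h _ := hg _ (Fc n) in h).
by have [_ _ [y [hy []]]] := hg _ (Fc N); apply: (hN N.+1 y hy).
Qed.

Lemma noetherian_maximal_ideal_sup I : ideal A I -> ~ I 1 ->
  exists2 N, maximal_ideal A N & forall x, I x -> N x.
Proof.
move=> hI hI1.
have [N [hN IN] Nmax] :=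
  @noetherian_maximal (fun J => (ideal A J /\ ~ J 1) /\ forall x, I x -> J x)
    (fun J hJ => proj1 (proj1 hJ)) (ex_intro _ I (conj (conj hI hI1) (fun x hx => hx))).
exists N => //; split=> // J hJ NJ; apply: Nmax => //; split=> // x /IN; apply: NJ.
Qed.

Lemma noetherian_prime_avoid_pow r w : A w -> (forall k, ~ principal A w (r ^+ k)) ->
  exists2 P, prime_ideal A P & P w /\ forall k, ~ P (r ^+ k).
Proof.
move=> hw hwr.
have [I [hI hIw hIr] Imax] :=
  @noetherian_maximal (fun I => [/\ ideal A I, I w & forall k, ~ I (r ^+ k)])
    (fun I => fun h => let: And3 h _ _ := h in h)
    (ex_intro _ _ (And3 (principal_ideal sA hw) (principal_self sA w) hwr)).
exists I => //; split; first by split=> //; apply: (hIr 0%N).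
have meets a : A a -> ~ I a -> exists k, ideal_adjoin A I a (r ^+ k).
  move=> ha hIa; apply: NNPP => hn; apply: hIa.
  apply: (Imax (ideal_adjoin A I a)); last exact: ideal_adjoin_mem.
  - split; [exact: ideal_adjoin_ideal | exact: ideal_adjoin_sub | by move=> k hk; apply: hn; exists k].
  - by move=> x; apply: ideal_adjoin_sub.
move=> a b ha hb hab; apply: NNPP => /not_or_and [hIa hIb].
have [k1 [i1 [d1 [hi1 hd1 e1]]]] := meets a ha hIa.
have [k2 [i2 [d2 [hi2 hd2 e2]]]] := meets b hb hIb.
apply: (hIr (k1 + k2)%N).
have -> : r ^+ (k1 + k2) = i1 * (i2 + b * d2) + i2 * (a * d1) + (a * b) * (d1 * d2).
  by rewrite exprD e1 e2; ring.
apply: (idealD hI); first apply: (idealD hI).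
- exact: (idealMr hI (subringD sA (ideal_sub hI hi2) (subringM sA hb hd2)) hi1).
- exact: (idealMr hI (subringM sA ha hd1) hi2).
- exact: (idealMr hI (subringM sA hd1 hd2) hab).
Qed.

Lemma noetherian_atomic : atomic A.
Proof.
move=> x0 hx0 hx00 hxu0; apply: NNPP => hbad0.
have [_ [x [hx hxn hxu hbad ->]] xmax] := @noetherian_maximal
  (fun I => exists x, [/\ A x, x != 0, ~ unit_in A x,
              ~ (exists s, factorization A s x) & I = principal A x])
  (fun I => fun '(ex_intro x (And5 hx _ _ _ e)) => eq_ind_r _ (principal_ideal sA hx) e)
  (ex_intro _ _ (ex_intro _ x0 (And5 hx0 hx00 hxu0 hbad0 erefl))).
(* a non-factorable proper divisor [y] of [x] would generate a strictly larger principal ideal *)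
have bad_divisor y z : A y -> A z -> x = y * z -> ~ unit_in A y -> ~ unit_in A z ->
    ~ (exists s, factorization A s y) -> False.
  move=> hy hz e hyu hzu hyb.
  have hy0 : y != 0 by apply: contraNneq hxn => h; rewrite e h mul0r.
  have xy w : principal A x w -> principal A y w.
    by case=> d hd ->; exists (z * d); [apply: subringM | rewrite e mulrA].
  have [c hc ec] := xmax _ (ex_intro _ y (And5 hy hy0 hyu hyb erefl)) xy y (principal_self sA y).
  by apply/hzu/(unit_in_mul1 hz hc)/(mulfI hy0); rewrite mulr1 mulrA -e -ec.
have [a [b [ha hb e hnu]]] : exists a b, [/\ A a, A b, x = a * b &
    ~ (unit_in A a \/ unit_in A b)].
  apply: NNPP => hn; apply: hbad; exists [:: x]; apply: factorization1.
  by split=> // a b ha hb e; apply: NNPP => h; apply: hn; exists a, b.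
have [hau hbu] := not_or_and _ _ hnu.
have [[sa hsa]|] := classic (exists s, factorization A s a); last exact: bad_divisor e hau hbu.
have [[sb hsb]|hnb] := classic (exists s, factorization A s b).
  by apply: hbad; exists (sa ++ sb); rewrite e; apply: factorization_cat.
by apply: (bad_divisor b a hb ha _ hbu hau hnb); rewrite e mulrC.
Qed.

End Noetherian.

Section LocalNoetherian.
Variables (L : fieldType) (A M : L -> Prop).
Hypotheses (sA : subring A) (nA : noetherian A) (Mmax : maximal_ideal A M).
Hypothesis Muniq : forall N, maximal_ideal A N -> same_set N M.
Implicit Types (x y u w r : L).

Let hM := maximal_ideal_ideal Mmax.

Lemma unit_notin_max u : unit_in A u -> ~ M u.
Proof. by move=> hu /(ideal_unit hM hu); apply: maximal_ideal_not1 Mmax. Qed.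

Lemma notin_max_unit x : A x -> ~ M x -> unit_in A x.
Proof.
move=> hx hMx; apply: NNPP => hu.
have hx1 : ~ principal A x 1.
  by case=> d hd e; apply: hu; apply: (unit_in_mul1 hx hd); rewrite -e.
have [N hN sub] := noetherian_maximal_ideal_sup sA nA (principal_ideal sA hx) hx1.
by apply/hMx/(Muniq hN)/sub; apply: principal_self.
Qed.

Section PrincipalMaximal.
Variable p : L.
Hypotheses (p0 : p != 0) (Mp : same_set (principal A p) M).

Lemma max_gen : M p. Proof. by apply/Mp; apply: principal_self. Qed.

Lemma gen_mem : A p. Proof. exact: (ideal_sub hM max_gen). Qed.

Lemma max_gen_pow n : (0 < n)%N -> M (p ^+ n).
Proof.
by case: n => // n _; rewrite exprS; apply: (idealMr hM _ max_gen); apply: subringX gen_mem.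
Qed.

Lemma unit_mul_gen_pow x : A x -> x != 0 -> exists u n, unit_in A u /\ x = u * p ^+ n.
Proof.
move=> hx hx0.
have [_ [y [n [hy e ->]]] ymax] := @noetherian_maximal _ _ sA nA
  (fun I => exists y n, [/\ A y, x = y * p ^+ n & I = principal A y])
  (fun I '(ex_intro y (ex_intro _ (And3 hy _ e))) => eq_ind_r _ (principal_ideal sA hy) e)
  (ex_intro _ _ (ex_intro _ x (ex_intro _ 0%N (And3 hx (esym (mulr1 x)) erefl)))).
have hy0 : y != 0 by apply: contraNneq hx0 => y0; rewrite e y0 mul0r.
have [hMy|hMy] := classic (M y); last by exists y, n; split=> //; apply: notin_max_unit.
(* [y = p * y'] and maximality of [y A] among such ideals force [p] to be a unit *)
have [y' hy' ey] := proj2 (Mp y) hMy.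
have yy' z : principal A y z -> principal A y' z.
  by case=> c hc ->; exists (p * c); [apply: subringM gen_mem hc | rewrite ey; ring].
have Fy' : exists y'' n, [/\ A y'', x = y'' * p ^+ n & principal A y' = principal A y''].
  by exists y', n.+1; split=> //; rewrite e ey exprSr; ring.
have [c hc ec] := ymax _ Fy' yy' y' (principal_self sA y').
have /unit_notin_max[] : unit_in A p.
  apply: (unit_in_mul1 gen_mem hc); apply: (mulfI hy0).
  by rewrite mulr1 {2}ey ec; ring.
exact: max_gen.
Qed.

Lemma unit_mul_gen_pow_inj u u' m n : unit_in A u -> unit_in A u' ->
  u * p ^+ m = u' * p ^+ n -> m = n.
Proof.
wlog hmn : u u' m n / (m <= n)%N.
  move=> W hu hu' e; case: (leqP m n) => h; first exact: W hu hu' e.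
  by symmetry; apply: W hu' hu _ => //; apply: ltnW.
move=> hu [hu' _ _] e; apply/eqP; rewrite eqn_leq hmn leqNgt; apply/negP => hlt.
apply: (unit_notin_max hu).
have -> : u = u' * p ^+ (n - m).
  by apply: (mulIf (expf_neq0 m p0)); rewrite e -mulrA -exprD subnK.
by apply: (idealMl hM hu'); apply: max_gen_pow; rewrite subn_gt0.
Qed.

Lemma irreducible_assoc_gen x : irreducible_in A x <-> assoc_in A x p.
Proof.
split=> [[hx hx0 hxu hirr]|[u [hu ->]]].
  have [u [[|[|n]] [hu e]]] := unit_mul_gen_pow hx hx0.
  - by case: hxu; rewrite e expr0 mulr1.
  - by exists u; rewrite e expr1.
  have e2 : x = (u * p) * p ^+ n.+1 by rewrite e exprS mulrA.
  have [hu1 _ _] := hu.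
  case: (hirr _ _ (subringM sA hu1 gen_mem) (subringX sA n.+1 gen_mem) e2) => /unit_notin_max[].
    exact: (idealMl hM hu1 max_gen).
  exact: max_gen_pow.
have [hu1 hu0 _] := hu.
split; [exact: subringM gen_mem | by rewrite mulf_neq0 |
        by move/unit_notin_max; apply; apply: (idealMl hM hu1 max_gen) |].
move=> a b ha hb e.
have ha0 : a != 0 by apply: contra_eq_neq e => ->; rewrite mul0r mulf_neq0.
have hb0 : b != 0 by apply: contra_eq_neq e => ->; rewrite mulr0 mulf_neq0.
have [ua [i [hua ea]]] := unit_mul_gen_pow ha ha0.
have [ub [j [hub eb]]] := unit_mul_gen_pow hb hb0.
have : u * p ^+ 1 = (ua * ub) * p ^+ (i + j).
  by rewrite expr1 e ea eb exprD mulrACA.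
move/(unit_mul_gen_pow_inj hu (unit_inM sA hua hub)).
case: i ea => [|i] ea; first by left; rewrite ea expr0 mulr1.
by case: j eb => [|j] eb; [right; rewrite eb expr0 mulr1 | rewrite addSn addnS].
Qed.

Lemma factorization_gen_pow s x : factorization A s x ->
  exists u, unit_in A u /\ x = u * p ^+ size s.
Proof.
elim: s x => [|y s IH] x [hs <-].
  by exists 1; split; [apply: unit_in1 | rewrite big_nil expr0 mulr1].
have [u [hu ey]] := proj1 (irreducible_assoc_gen y) (hs 0%N isT).
have [w [hw ew]] := IH _ (conj (fun i => hs i.+1) erefl).
exists (u * w); split; first exact: unit_inM.
by rewrite big_cons ew ey /= exprS mulrACA.
Qed.

Lemma principal_max_UFD : UFD A.
Proof.
split=> [x hx hx0 hxu|s t x hs ht].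
  have [u [[|n] [hu e]]] := unit_mul_gen_pow hx hx0.
    by case: hxu; rewrite e expr0 mulr1.
  exists ((u * p) :: nseq n p); split.
    move=> [|i] hi; apply/irreducible_assoc_gen; first by exists u.
    by move: hi; rewrite /= size_nseq ltnS nth_nseq => ->; apply: assoc_in_refl.
  by rewrite big_cons e exprS mulrA; congr (_ * _); elim: n {e} => [|n IH];
    rewrite ?big_nil ?expr0 // big_cons IH exprS.
have [u [hu eu]] := factorization_gen_pow hs.
have [w [hw ew]] := factorization_gen_pow ht.
have hsz : size s = size t by apply: (unit_mul_gen_pow_inj hu hw); rewrite -eu -ew.
split=> //; exists t; split=> // i hi.
apply: (assoc_in_trans sA (proj1 (irreducible_assoc_gen _) (proj1 hs i hi))).
by apply/assoc_in_sym/irreducible_assoc_gen; apply: (proj1 ht); rewrite -hsz.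
Qed.

End PrincipalMaximal.

Hypothesis dA : dim_one A.

Lemma prime_nonzero_max P : prime_ideal A P -> (exists x, P x /\ x != 0) -> same_set P M.
Proof. by move=> hP hnz; apply: Muniq; case: dA => _; apply. Qed.

Lemma max_nonzero : exists m, M m /\ m != 0.
Proof.
case: dA => [[P [hP [x [hx hx0]]]] _].
by exists x; split=> //; apply/(prime_nonzero_max hP); first by exists x.
Qed.

Lemma max_pow_principal r w : M r -> A w -> w != 0 -> exists k, principal A w (r ^+ k).
Proof.
move=> hr hw hw0; apply: NNPP => hn.
have [P hP [hPw hPr]] :=
  noetherian_prime_avoid_pow sA nA hw (fun k hk => hn (ex_intro _ k hk)).
apply: (hPr 1%N); rewrite expr1.
by apply/(prime_nonzero_max hP); first by exists w.
Qed.

End LocalNoetherian.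

Section Valuation.
Variables (L : fieldType) (v : L -> int).
Hypothesis vM : forall x y, x != 0 -> y != 0 -> v (x * y) = v x + v y.
Implicit Types x y : L.

Lemma valuation1 : v 1 = 0.
Proof. by apply: (@addrI _ (v 1)); rewrite addr0 -vM ?mulr1 ?oner_neq0. Qed.

Lemma valuationV x : x != 0 -> v x^-1 = - v x.
Proof.
by move=> hx; apply: (@addrI _ (v x)); rewrite addrN -vM ?invr_neq0 // mulfV // valuation1.
Qed.

Lemma valuationN x : x != 0 -> v (- x) = v x.
Proof.
move=> hx; have hN1 : (-1 : L) != 0 by rewrite oppr_eq0 oner_neq0.
have h : v (-1) + v (-1) = 0 by rewrite -vM // mulrNN mulr1 valuation1.
by rewrite -mulN1r vM //; lia.
Qed.

Lemma valuationX x n : x != 0 -> v (x ^+ n) = v x * n%:Z.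
Proof.
move=> hx; elim: n => [|n IH]; first by rewrite expr0 valuation1 mulr0.
by rewrite exprS vM ?expf_neq0 // IH; lia.
Qed.

Lemma valuation_div x y : x != 0 -> y != 0 -> v (x / y) = v x - v y.
Proof. by move=> hx hy; rewrite vM ?invr_neq0 // valuationV. Qed.

Hypothesis vA : forall x y, x != 0 -> y != 0 -> x + y != 0 ->
  Num.min (v x) (v y) <= v (x + y).

Lemma valuationD_lt x y : x != 0 -> y != 0 -> v x < v y ->
  x + y != 0 /\ v (x + y) = v x.
Proof.
move=> hx hy hlt.
have hxy : x + y != 0.
  by apply: contraTneq hlt => /eqP; rewrite addr_eq0 => /eqP ->; rewrite valuationN // ltxx.
have h1 : Num.min (v x) (v y) <= v (x + y) := vA hx hy hxy.
have h2 : Num.min (v (x + y)) (v y) <= v x.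
  have hNy : - y != 0 by rewrite oppr_eq0.
  by have := vA hxy hNy; rewrite addrK valuationN //; apply.
split=> //; move: h1 h2; rewrite !ge_min => /orP[h1|h1] /orP[h2|h2]; lia.
Qed.

End Valuation.

Section AbsolutelyIrreducible.
Variables (L : fieldType) (A : L -> Prop).
Hypotheses (sA : subring A) (aA : atomic A).
Implicit Types (x y r : L) (s : seq L).

Lemma prod_assoc_pow r s : (forall i, (i < size s)%N -> assoc_in A s`_i r) ->
  exists u, unit_in A u /\ \prod_(y <- s) y = u * r ^+ size s.
Proof.
elim: s => [|y s IH] h.
  by exists 1; split; [apply: unit_in1 | rewrite big_nil expr0 mulr1].
have [u [hu eu]] : assoc_in A y r := h 0%N isT.
have [w [hw ew]] := IH (fun i => h i.+1).
exists (u * w); split; first exact: unit_inM.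
by rewrite big_cons ew eu exprS mulrACA.
Qed.

Lemma abs_irreducible_dvd_pow r k x y : abs_irreducible A r -> A x -> A y ->
  x * y = r ^+ k -> exists u j, unit_in A u /\ x = u * r ^+ j.
Proof.
move=> [[hr hr0 _ _] habs] hx hy e.
have hrk0 : r ^+ k != 0 by rewrite expf_neq0.
have hx0 : x != 0 by apply: contraNneq hrk0 => h; rewrite -e h mul0r.
have hy0 : y != 0 by apply: contraNneq hrk0 => h; rewrite -e h mulr0.
have [hxu|hxu] := classic (unit_in A x); first by exists x, 0%N; rewrite expr0 mulr1.
have [hyu|hyu] := classic (unit_in A y).
  exists y^-1, k; split; first exact: unit_inV.
  by rewrite -e mulrC mulfK.
have [sx hsx] := aA hx hx0 hxu.
have [sy hsy] := aA hy hy0 hyu.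
have := factorization_cat hsx hsy; rewrite e => /habs [hsz [t [hperm hass]]].
(* the factorization [sx ++ sy] of [r ^+ k] is a permutation of [nseq k r] up to units *)
have ht i : (i < size t)%N -> t`_i = r.
  by move=> /(mem_nth 0); rewrite -(perm_mem hperm) => /nseqP[].
have [u [hu eu]] : exists u, unit_in A u /\ \prod_(z <- sx) z = u * r ^+ size sx.
  apply: prod_assoc_pow => i hi.
  have hi' : (i < size (sx ++ sy))%N by rewrite size_cat ltn_addr.
  have hit : (i < size t)%N by rewrite -(perm_size hperm) -hsz.
  by have := hass i hi'; rewrite nth_cat hi ht.
by exists u, (size sx); split=> //; rewrite -eu; case: hsx.
Qed.

End AbsolutelyIrreducible.

Section Intersection.
Variables (L : fieldType) (D V M : L -> Prop) (v : L -> int) (pi : L).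
Hypotheses (sD : subring D) (sV : subring V) (qD : quotient_field_is D).
Hypotheses (nD : noetherian D) (dD : dim_one D) (Mmax : maximal_ideal D M).
Hypothesis Muniq : forall N, maximal_ideal D N -> same_set N M.
Hypothesis vM : forall x y, x != 0 -> y != 0 -> v (x * y) = v x + v y.
Hypothesis vA : forall x y, x != 0 -> y != 0 -> x + y != 0 ->
  Num.min (v x) (v y) <= v (x + y).
Hypothesis vS : forall n : int, exists x, x != 0 /\ v x = n.
Hypothesis Vv : forall x, V x <-> (x = 0 \/ (x != 0 /\ 0 <= v x)).
Hypotheses (pV : prime_elt V pi) (pR : prime_elt (capS D V) pi) (nU : ~ UFD D).

Local Notation R := (capS D V).
Let hM := maximal_ideal_ideal Mmax.
Implicit Types (x y z a b c d e : L).

Lemma V_valuation x : x != 0 -> V x <-> 0 <= v x.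
Proof.
move=> hx; rewrite Vv; split=> [[hx0|[]//]|]; last by right.
by move: hx; rewrite hx0 eqxx.
Qed.

Lemma subring_R : subring R.
Proof.
split; first by split; [apply: subring0 sD | apply: subring0 sV].
- by split; [apply: subring1 sD | apply: subring1 sV].
- by move=> x y [hxD hxV] [hyD hyV]; split; [apply: subringB | apply: subringB].
- by move=> x y [hxD hxV] [hyD hyV]; split; [apply: subringM | apply: subringM].
Qed.

Lemma R_valuation x : R x -> x != 0 -> 0 <= v x.
Proof. by move=> [_ hx] hx0; apply/(V_valuation hx0). Qed.

Lemma pi_R : R pi. Proof. by case: pR. Qed.
Lemma pi_neq0 : pi != 0. Proof. by case: pR. Qed.

Lemma valuation_pi : v pi = 1.
Proof.
have [_ _ hpu hpr] := pV.
have h0 : 0 <= v pi by apply: R_valuation pi_R pi_neq0.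
have h1 : v pi != 0.
  apply/eqP => vpi0; apply: hpu; split; [exact: (proj2 pi_R) | exact: pi_neq0 |].
  by apply/(V_valuation (invr_neq0 pi_neq0)); rewrite (valuationV vM) ?vpi0 ?pi_neq0.
(* a prime of [V] cannot have valuation [>= 2]: it would divide [u * (pi / u)] with [v u = 1] *)
have [u [hu0 hu]] := vS 1.
suff : v pi <= 1 by lia.
rewrite leNgt; apply/negP => h2.
have hq0 : pi / u != 0 by rewrite mulf_neq0 ?invr_neq0 ?pi_neq0.
have hVu : V u by apply/(V_valuation hu0); rewrite hu.
have hVq : V (pi / u) by apply/(V_valuation hq0); rewrite (valuation_div vM) ?pi_neq0 // hu; lia.
have : divides_in V pi (u * (pi / u)).
  by exists 1; split; [apply: subring1 sV | rewrite mulr1 mulrCA mulfV // mulr1].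
case/(hpr _ _ hVu hVq) => [[w [hw ew]]|[w [hw ew]]].
  have hw0 : w != 0 by apply: contraNneq hu0 => w0; rewrite ew w0 mulr0.
  have := vM pi_neq0 hw0; rewrite -ew hu; move/(V_valuation hw0): hw; lia.
have hw0 : w != 0 by apply: contraNneq hq0 => w0; rewrite ew w0 mulr0.
have := vM pi_neq0 hw0; rewrite -ew (valuation_div vM) ?pi_neq0 // hu.
move/(V_valuation hw0): hw; lia.
Qed.

Lemma exists_D_neg_valuation : exists z, [/\ D z, z != 0 & v z < 0].
Proof.
apply: NNPP => hn.
have DV z : D z -> V z.
  move=> hz; apply/Vv; have [->|hz0] := eqVneq z 0; first by left.
  by right; split=> //; rewrite leNgt; apply/negP => hlt; apply: hn; exists z.
(* otherwise [R = D], so [pi D] is a nonzero prime, hence the maximal ideal of [D] *)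
have hpD : prime_elt D pi.
  case: pR => [[hpD _] hp0 hpu hpr]; split=> // [[h1 h2 h3]|a b ha hb hab].
    by apply: hpu; split=> //; split; auto.
  have : divides_in R pi (a * b).
    by case: hab => w [hw ew]; exists w; split=> //; split; [| apply: DV].
  by case/(hpr _ _ (conj ha (DV _ ha)) (conj hb (DV _ hb))) => [[w [[hw _] ew]]|[w [[hw _] ew]]];
    [left|right]; exists w.
have hP := principal_prime sD hpD.
apply/nU/(principal_max_UFD sD nD Mmax Muniq pi_neq0).
by apply: (prime_nonzero_max Muniq dD hP); exists pi; split; [apply: principal_self | apply: pi_neq0].
Qed.

Lemma exists_M_neg_valuation : exists z, [/\ M z, z != 0 & v z < 0].
Proof.
have [z [hz hz0 hvz]] := exists_D_neg_valuation.
have [m [hm hm0]] := max_nonzero Muniq dD.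
have [hvm|hvm] := lerP 0 (v m); last by exists m.
exists (z ^+ (`|v m|%N.+1) * m); split.
- exact: (idealMl hM (subringX sD _ hz) hm).
- by rewrite mulf_neq0 // expf_neq0.
- by rewrite vM ?expf_neq0 // (valuationX vM) //; nia.
Qed.

Lemma pi_notin_M : ~ M pi.
Proof.
move=> hMpi.
have [z [hz hz0 hvz]] := exists_M_neg_valuation.
pose k := `|v z|%N.
have ek : v z = - (k%:Z) by rewrite /k; lia.
have hk : (0 < k)%N by rewrite /k; lia.
(* [s = (1 + z)^-1] is a unit of [D] of valuation [k], and [pi] divides [s * (pi ^+ k * z)] in [R] *)
have h1z : ~ M (1 + z).
  move=> h; apply: (maximal_ideal_not1 Mmax); rewrite -(addrK z 1) -mulN1r.
  exact: (idealD hM h (idealMl hM (subringN sD (subring1 sD)) hz)).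
have hsD := notin_max_unit sD nD Muniq (subringD sD (subring1 sD) (ideal_sub hM hz)) h1z.
have hv1z : v (1 + z) = v z.
  have hlt : v z < v 1 by rewrite (valuation1 vM).
  by have [_ e] := valuationD_lt vM vA hz0 (oner_neq0 L) hlt; rewrite addrC e.
pose s := (1 + z)^-1.
have h1z0 : 1 + z != 0 by case: hsD.
have hs0 : s != 0 by rewrite invr_eq0.
have hvs : v s = k%:Z by rewrite /s (valuationV vM h1z0) hv1z ek opprK.
have hsR : R s by split; [case: hsD | apply/(V_valuation hs0); rewrite hvs].
pose y := pi ^+ k * z.
have hy0 : y != 0 by rewrite mulf_neq0 ?expf_neq0 ?pi_neq0.
have hvy : v y = 0 by rewrite vM ?expf_neq0 ?pi_neq0 // (valuationX vM) ?pi_neq0 // valuation_pi ek; lia.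
have hyR : R y.
  by split; [apply: subringM (subringX sD _ (proj1 pi_R)) (ideal_sub hM hz) | apply/(V_valuation hy0); rewrite hvy].
have hdiv : divides_in R pi (s * y).
  have hc0 : s * pi ^+ k.-1 * z != 0 by rewrite !mulf_neq0 // expf_neq0 // pi_neq0.
  exists (s * pi ^+ k.-1 * z); split.
    split; first by apply: subringM (subringM sD (proj1 hsR) (subringX sD _ (proj1 pi_R))) (ideal_sub hM hz).
    apply/(V_valuation hc0); rewrite !vM ?mulf_neq0 ?expf_neq0 ?pi_neq0 //.
    by rewrite (valuationX vM) ?pi_neq0 // valuation_pi hvs ek; lia.
  by rewrite /y -(prednK hk) exprS prednK //; ring.
case: pR => _ _ _ /(_ _ _ hsR hyR hdiv) [[c [[hcD _] ec]] | [c [[hcD hcV] ec]]].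
  by apply: (unit_notin_max Mmax (unit_inV hsD)); rewrite -/s ec; exact: (idealMr hM hcD hMpi).
have hc0 : c != 0 by apply: contraNneq hy0 => c0; rewrite ec c0 mulr0.
have := vM pi_neq0 hc0; rewrite -ec hvy valuation_pi; move/(V_valuation hc0): hcV; lia.
Qed.

Lemma pi_unit_D : unit_in D pi.
Proof. exact: (notin_max_unit sD nD Muniq (proj1 pi_R) pi_notin_M). Qed.

Lemma unit_R x : unit_in R x <-> unit_in D x /\ v x = 0.
Proof.
split=> [[[hxD hxV] hx0 [hiD hiV]]|[[hxD hx0 hiD] hvx]].
  split=> //; move/(V_valuation hx0): hxV; move/(V_valuation (invr_neq0 hx0)): hiV.
  by rewrite (valuationV vM) //; lia.
split=> //; split=> //; first by apply/(V_valuation hx0); rewrite hvx.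
by apply/(V_valuation (invr_neq0 hx0)); rewrite (valuationV vM) // hvx.
Qed.

Lemma D_normalize d : d != 0 -> exists e, unit_in D e /\ v (d * e) = 0.
Proof.
move=> hd; have [hv|hv] := lerP 0 (v d).
  exists (pi^-1 ^+ `|v d|%N); split; first exact: (unit_inX sD _ (unit_inV pi_unit_D)).
  rewrite vM ?expf_neq0 ?invr_neq0 ?pi_neq0 // (valuationX vM) ?invr_neq0 ?pi_neq0 //.
  by rewrite (valuationV vM) ?pi_neq0 // valuation_pi; lia.
exists (pi ^+ `|v d|%N); split; first exact: (unit_inX sD _ pi_unit_D).
by rewrite vM ?expf_neq0 ?pi_neq0 // (valuationX vM) ?pi_neq0 // valuation_pi; lia.
Qed.

Lemma D_pi_pow_R d : D d -> exists n, R (pi ^+ n * d).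
Proof.
move=> hd; exists `|v d|%N; split; first exact: (subringM sD (subringX sD _ (proj1 pi_R)) hd).
have [->|hd0] := eqVneq d 0; first by rewrite mulr0; apply: subring0 sV.
have hpd : pi ^+ `|v d|%N * d != 0 by rewrite mulf_neq0 ?expf_neq0 ?pi_neq0.
apply/(V_valuation hpd); rewrite vM ?expf_neq0 ?pi_neq0 // (valuationX vM) ?pi_neq0 // valuation_pi.
lia.
Qed.

Lemma V_fraction_R x : V x -> exists a b, [/\ R a, R b, b != 0, v b = 0 & x = a / b].
Proof.
move=> hx; have [->|hx0] := eqVneq x 0.
  exists 0, 1; rewrite mul0r (valuation1 vM); split=> //; [exact: subring0 subring_R | exact: subring1 subring_R | exact: oner_neq0].
have [a [b [ha hb hb0 ex]]] := qD x; subst x.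
have [e [[he he0 _] hve]] := D_normalize hb0.
have hbe0 : b * e != 0 by rewrite mulf_neq0.
exists (a * e), (b * e); split=> //; last by rewrite invfM mulrACA mulfV // mulr1.
- split; first exact: subringM.
  have -> : a * e = (a / b) * (b * e) by rewrite mulrA divfK.
  apply/(V_valuation (mulf_neq0 hx0 hbe0)); rewrite vM // hve addr0.
  exact/(V_valuation hx0).
- by split; [apply: subringM | apply/(V_valuation hbe0); rewrite hve].
Qed.


Definition MR x := R x /\ M x.
Definition PiR x := R x /\ (x != 0 -> 0 < v x).

Lemma ideal_MR : ideal R MR.
Proof.
split=> [x []//|||].
- by split; [exact: (subring0 subring_R) | exact: (ideal0 hM)].
- by move=> x y [hx hMx] [hy hMy]; split; [exact: (subringD subring_R hx hy) | exact: (idealD hM hMx hMy)].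
- by move=> r x hr [hx hMx]; split; [exact: (subringM subring_R hr hx) | exact: (idealMl hM (proj1 hr) hMx)].
Qed.

Lemma ideal_PiR : ideal R PiR.
Proof.
split=> [x []//|||].
- by split; [exact: (subring0 subring_R) | rewrite eqxx].
- move=> x y [hx hvx] [hy hvy]; split=> [|hxy]; first exact: (subringD subring_R hx hy).
  have [x0|hx0] := eqVneq x 0; first by move: hxy; rewrite x0 add0r; apply: hvy.
  have [y0|hy0] := eqVneq y 0; first by move: hxy; rewrite y0 addr0; apply: hvx.
  have h : Num.min (v x) (v y) <= v (x + y) := vA hx0 hy0 hxy.
  by move: h (hvx hx0) (hvy hy0); rewrite ge_min => /orP[] h1 h2 h3; lia.
- move=> r x hr [hx hvx]; split=> [|hrx]; first exact: (subringM subring_R hr hx).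
  have [hr0 hx0] : r != 0 /\ x != 0 by apply/andP; rewrite -negb_or -mulf_eq0.
  by rewrite vM //; move: (hvx hx0) (R_valuation hr hr0); lia.
Qed.

Lemma MR_not1 : ~ MR 1. Proof. by case=> _; apply: maximal_ideal_not1 Mmax. Qed.

Lemma PiR_not1 : ~ PiR 1.
Proof. by case=> _ /(_ (oner_neq0 L)); rewrite (valuation1 vM) ltxx. Qed.

Lemma R_notin_PiR x : R x -> ~ PiR x -> x != 0 /\ v x = 0.
Proof.
move=> hx hPx; have [x0|hx0] := eqVneq x 0; first by case: hPx; split=> //; rewrite x0 eqxx.
split=> //; have := R_valuation hx hx0; rewrite le_eqVlt => /orP[/eqP // | hv].
by case: hPx; split.
Qed.

Lemma R_comaximal a b : R a -> ~ M a -> R b -> ~ PiR b ->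
  unit_in R a \/ unit_in R b \/ unit_in R (a + b).
Proof.
move=> ha hMa hb hPb.
have [hb0 hvb] := R_notin_PiR hb hPb.
have hua := notin_max_unit sD nD Muniq (proj1 ha) hMa.
have [hva|hva] := eqVneq (v a) 0; first by left; apply/unit_R.
have [hMb|hMb] := classic (M b); last first.
  by right; left; apply/unit_R; split=> //; exact: (notin_max_unit sD nD Muniq (proj1 hb) hMb).
right; right; apply/unit_R; split.
  apply: (notin_max_unit sD nD Muniq (subringD sD (proj1 ha) (proj1 hb))) => hMab.
  by apply: hMa; rewrite -(addrK b a) -mulN1r; exact: (idealD hM hMab (idealMl hM (subringN sD (subring1 sD)) hMb)).
have hlt : v b < v a by rewrite hvb lt_def hva /=; apply: R_valuation ha _; case: hua.
have ha0 : a != 0 by case: hua.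
by have [_ e] := valuationD_lt vM vA hb0 ha0 hlt; rewrite addrC e.
Qed.

Lemma R_proper_ideal_sub I : ideal R I -> ~ I 1 ->
  (forall x, I x -> MR x) \/ (forall x, I x -> PiR x).
Proof.
move=> hI hI1; apply: NNPP => /not_or_and [/not_all_ex_not [a haQ] /not_all_ex_not [b hbP]].
have [haI haM] := imply_to_and _ _ haQ; have [hbI hbPi] := imply_to_and _ _ hbP.
have ha := ideal_sub hI haI; have hb := ideal_sub hI hbI.
have hMa : ~ M a by move=> h; apply: haM.
case: (R_comaximal ha hMa hb hbPi) => [hu|[hu|hu]]; apply: hI1.
- exact: (ideal_unit hI hu haI).
- exact: (ideal_unit hI hu hbI).
- exact: (ideal_unit hI hu (idealD hI haI hbI)).
Qed.

Lemma exists_MR_notin_PiR : exists t, MR t /\ ~ PiR t.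
Proof.
have [m [hm hm0]] := max_nonzero Muniq dD.
have [e [[he he0 _] hve]] := D_normalize hm0.
have hme0 : m * e != 0 by rewrite mulf_neq0.
have hMme : M (m * e) := idealMr hM he hm.
exists (m * e); split; first by split=> //; split; [exact: (ideal_sub hM hMme) | apply/(V_valuation hme0); rewrite hve].
by case=> _ /(_ hme0); rewrite hve ltxx.
Qed.

Lemma PiR_pi : PiR pi.
Proof. by split; [exact: pi_R | rewrite valuation_pi]. Qed.

Lemma maximal_MR : maximal_ideal R MR.
Proof.
split=> [|J [hJ hJ1] MJ x Jx]; first by split; [exact: ideal_MR | exact: MR_not1].
case: (R_proper_ideal_sub hJ hJ1) => [|JP]; first by apply.
by have [t [/MJ /JP ht]] := exists_MR_notin_PiR.
Qed.

Lemma maximal_PiR : maximal_ideal R PiR.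
Proof.
split=> [|J [hJ hJ1] PJ x Jx]; first by split; [exact: ideal_PiR | exact: PiR_not1].
case: (R_proper_ideal_sub hJ hJ1) => [JM|]; last by apply.
by have [_ /pi_notin_M] := JM _ (PJ _ PiR_pi).
Qed.

Lemma maximal_R_cases N : maximal_ideal R N -> same_set N MR \/ same_set N PiR.
Proof.
move=> [[hN hN1] Nmax].
case: (R_proper_ideal_sub hN hN1) => sub; [left | right] => x; split=> [/sub //|].
  by apply: Nmax => //; split; [exact: ideal_MR | exact: MR_not1].
by apply: Nmax => //; split; [exact: ideal_PiR | exact: PiR_not1].
Qed.


Lemma prime_PiR : prime_ideal R PiR.
Proof.
split; first by split; [exact: ideal_PiR | exact: PiR_not1].
move=> a b ha hb [_ hab].
have [a0|ha0] := eqVneq a 0; first by left; split=> //; rewrite a0 eqxx.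
have [b0|hb0] := eqVneq b 0; first by right; split=> //; rewrite b0 eqxx.
move: (hab (mulf_neq0 ha0 hb0)); rewrite vM //.
move: (R_valuation ha ha0) (R_valuation hb hb0) => h1 h2 h3.
have [h|h] := ltrP 0 (v a); first by left; split.
by right; split=> // _; lia.
Qed.

Lemma R_div_pi x : R x -> x != 0 -> 0 < v x -> R (x / pi).
Proof.
move=> hx hx0 hvx; have [_ _ hpiV] := pi_unit_D.
have hq0 : x / pi != 0 by rewrite mulf_neq0 ?invr_neq0 ?pi_neq0.
split; first exact: (subringM sD (proj1 hx) hpiV).
by apply/(V_valuation hq0); rewrite (valuation_div vM) ?pi_neq0 // valuation_pi; lia.
Qed.

(* the ideal [I R[1/pi]] of [D = R[1/pi]] *)
Definition pi_saturation I x := D x /\ exists n, I (pi ^+ n * x).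

Lemma pi_pow_mono I n m x : ideal R I -> (n <= m)%N -> I (pi ^+ n * x) -> I (pi ^+ m * x).
Proof.
move=> hI hnm h; rewrite -(subnK hnm) exprD -mulrA.
exact: (idealMl hI (subringX subring_R _ pi_R) h).
Qed.

Lemma ideal_pi_saturation I : ideal R I -> ideal D (pi_saturation I).
Proof.
move=> hI; split=> [x []//|||].
- by split; [exact: (subring0 sD) | exists 0%N; rewrite mulr0; exact: (ideal0 hI)].
- move=> x y [hx [n hn]] [hy [m hm]]; split; first exact: (subringD sD hx hy).
  exists (n + m)%N; rewrite mulrDr; apply: (idealD hI).
  + exact: (pi_pow_mono hI (leq_addr m n) hn).
  + exact: (pi_pow_mono hI (leq_addl n m) hm).
- move=> r x hr [hx [n hn]]; split; first exact: (subringM sD hr hx).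
  have [m hm] := D_pi_pow_R hr; exists (m + n)%N.
  have -> : pi ^+ (m + n) * (r * x) = (pi ^+ m * r) * (pi ^+ n * x) by rewrite exprD; ring.
  exact: (idealMl hI hm hn).
Qed.

Lemma R_ideal_min_valuation I : ideal R I -> (exists y, I y /\ y != 0) ->
  exists y, [/\ I y, y != 0 & forall x, I x -> x != 0 -> v y <= v x].
Proof.
move=> hI [y0 [hIy0 hy00]].
suff min_below n y : (`|v y| <= n)%N -> I y -> y != 0 ->
    exists y, [/\ I y, y != 0 & forall x, I x -> x != 0 -> v y <= v x].
  exact: (min_below _ y0 (leqnn _) hIy0 hy00).
have vI x : I x -> x != 0 -> 0 <= v x by move=> hx; apply: R_valuation (ideal_sub hI hx).
elim: n y => [|n IH] y hn hy hy0.
  by exists y; split=> // x hx hx0; move: (vI x hx hx0) (vI y hy hy0); lia.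
have [[x [hx hx0 hlt]]|hno] := classic (exists x, [/\ I x, x != 0 & v x < v y]).
  by apply: (IH x) => //; move: (vI x hx hx0) (vI y hy hy0); lia.
by exists y; split=> // x hx hx0; rewrite leNgt; apply/negP => h; apply: hno; exists x.
Qed.

Lemma R_mul_eq_of_valuation_le x y : R x -> y != 0 -> (x != 0 -> v y <= v x) ->
  exists a b, [/\ R a, R b, b != 0, v b = 0 & b * x = a * y].
Proof.
move=> hx hy0 hle; have [->|hx0] := eqVneq x 0.
  exists 0, 1; rewrite mulr0 mul0r (valuation1 vM).
  by split=> //; [exact: (subring0 subring_R) | exact: (subring1 subring_R) | exact: oner_neq0].
have hq0 : x / y != 0 by rewrite mulf_neq0 ?invr_neq0.
have hq : V (x / y) by apply/(V_valuation hq0); rewrite (valuation_div vM) //; move: (hle hx0); lia.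
have [a [b [ha hb hb0 hvb e]]] := V_fraction_R hq.
exists a, b; split=> //.
have -> : x = (x / y) * y by rewrite divfK.
by rewrite e; field.
Qed.

Lemma R_pi_pow_comaximal n b : R b -> b != 0 -> v b = 0 ->
  exists la mu, [/\ R la, R mu & la * pi ^+ n + mu * b = 1].
Proof.
move=> hb hb0 hvb.
have hpn : R (pi ^+ n) := subringX subring_R n pi_R.
have hMpn : ~ M (pi ^+ n) := unit_notin_max Mmax (unit_inX sD n pi_unit_D).
have hPb : ~ PiR b by case=> _ /(_ hb0); rewrite hvb ltxx.
have R0 := subring0 subring_R.
case: (R_comaximal hpn hMpn hb hPb) => [[_ hp0 hpi]|[[_ _ hbi]|[_ hs0 hsi]]].
- by exists (pi ^+ n)^-1, 0; rewrite mul0r addr0 mulVf.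
- by exists 0, b^-1; rewrite mul0r add0r mulVf.
- by exists (pi ^+ n + b)^-1, (pi ^+ n + b)^-1; rewrite -mulrDr mulVf.
Qed.

Lemma noetherian_R : noetherian R.
Proof.
move=> I hI.
have [hnz|hz] := classic (exists y, I y /\ y != 0); last first.
  exists [::]; split=> //; apply: (generated_by_nil hI) => x hx.
  by apply: NNPP => hx0; apply: hz; exists x; split=> //; apply/eqP.
have [y [hyI hy0 ymin]] := R_ideal_min_valuation hI hnz.
have [g [_ /generated_by_span hg]] := nD (ideal_pi_saturation hI).
have [N hN] : exists N, forall i, (i < size g)%N -> I (pi ^+ N * g`_i).
  apply: (@common_bound (fun n i => I (pi ^+ n * g`_i))) => [n m i|i hi].
    exact: pi_pow_mono hI.
  by have [_] := proj2 (hg _) (span_mem sD hi).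
pose h := y :: [seq pi ^+ N * gi | gi <- g].
have hh i : (i < size h)%N -> I h`_i.
  case: i => [_|i]; first exact: hyI.
  by rewrite /= size_map => hi; rewrite (nth_map 0) //; apply: hN.
exists h; split=> [i /hh|]; first exact: (ideal_sub hI).
apply/generated_by_span => x; split=> [hx|]; last exact: (span_ideal hI hh).
have hxR := ideal_sub hI hx.
have [f hf ex] : span D g x.
  by apply/hg; split; [exact: (proj1 hxR) | exists 0%N; rewrite expr0 mul1r].
have [m hm] : exists m, forall i, (i < size g)%N -> R (pi ^+ m * f i).
  apply: (@common_bound (fun n i => R (pi ^+ n * f i))) => [n m i|i hi].
    exact: pi_pow_mono (ideal_self subring_R).
  exact: D_pi_pow_R (hf i hi).
have [a [b [ha hb hb0 hvb eab]]] := R_mul_eq_of_valuation_le hxR hy0 (ymin x hx).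
have [la [mu [hla hmu elm]]] := R_pi_pow_comaximal (m + N) hb hb0 hvb.
(* [x = la pi^(m+N) x + mu b x], and [b x = a y] *)
have -> : x = la * pi ^+ (m + N) * x + mu * a * y.
  by rewrite -(mulrA mu) -eab mulrA -mulrDl elm mul1r.
apply: (spanD subring_R).
  apply: (span_cons subring_R); exists (fun i => la * (pi ^+ m * f i)) => [i|].
    by rewrite size_map => hi; exact: (subringM subring_R hla (hm i hi)).
  rewrite size_map ex mulr_sumr; apply: eq_bigr => i _.
  by rewrite (nth_map 0) ?ltn_ord // exprD; ring.
apply: (spanMl subring_R); first exact: (subringM subring_R hmu ha).
exact: (span_mem subring_R (s := h) (i := 0) isT).
Qed.

Lemma prime_pi_saturation P : prime_ideal R P -> (forall n, ~ P (pi ^+ n)) ->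
  prime_ideal D (pi_saturation P).
Proof.
move=> [[hP _] hPp] hpn; split; first split; first exact: ideal_pi_saturation.
  by case=> _ [n]; rewrite mulr1; apply: hpn.
move=> a b ha hb [_ [n hn]].
have [m1 hm1] := D_pi_pow_R ha; have [m2 hm2] := D_pi_pow_R hb.
have hpR k : R (pi ^+ k) := subringX subring_R k pi_R.
have : P (pi ^+ n * ((pi ^+ m1 * a) * (pi ^+ m2 * b))).
  have -> : pi ^+ n * ((pi ^+ m1 * a) * (pi ^+ m2 * b)) =
      pi ^+ (m1 + m2) * (pi ^+ n * (a * b)) by rewrite exprD; ring.
  exact: (idealMl hP (hpR _) hn).
case/(hPp _ _ (hpR n) (subringM subring_R hm1 hm2)) => [/hpn //|].
by case/(hPp _ _ hm1 hm2) => h; [left | right]; split=> //; [exists m1 | exists m2].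
Qed.


Lemma prime_sub_MR_maximal P : prime_ideal R P -> (exists c, P c /\ c != 0) ->
  (forall x, P x -> MR x) -> maximal_ideal R P.
Proof.
move=> hP [c [hc hc0]] sub; have [[hPi _] hPp] := hP.
have hpn n : ~ P (pi ^+ n).
  by move=> /sub [_]; exact: (unit_notin_max Mmax (unit_inX sD n pi_unit_D)).
have Psat : same_set (pi_saturation P) M.
  apply: (prime_nonzero_max Muniq dD (prime_pi_saturation hP hpn)).
  exists c; split=> //; split; first exact: (proj1 (ideal_sub hPi hc)).
  by exists 0%N; rewrite expr0 mul1r.
apply: (maximal_ideal_same _ maximal_MR) => x; split=> [/sub //|[hx hMx]].
have [_ [n hn]] := proj2 (Psat x) hMx.
by case: (hPp _ _ (subringX subring_R n pi_R) hx hn) => // /hpn.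
Qed.

Lemma prime_sub_PiR_maximal P : prime_ideal R P -> (exists c, P c /\ c != 0) ->
  (forall x, P x -> PiR x) -> maximal_ideal R P.
Proof.
move=> hP [c [hc hc0]] sub; have [[hPi _] hPp] := hP.
have hvc : 0 < v c by apply: (proj2 (sub c hc)).
apply: (maximal_ideal_same _ maximal_PiR) => x; split=> [/sub //|[hx hvx]].
have [->|hx0] := eqVneq x 0; first exact: (ideal0 hPi).
(* [x ^+ k] with [k = v c] is a multiple [a c / b] of [c] by some [b] outside [PiR], hence outside [P] *)
pose k := `|v c|%N.
have hk : (0 < k)%N by rewrite /k; lia.
have hxk : R (x ^+ k) := subringX subring_R k hx.
have hle : x ^+ k != 0 -> v c <= v (x ^+ k).
  by move=> _; rewrite (valuationX vM) // /k; move: (hvx hx0); nia.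
have [a [b [ha hb hb0 hvb eab]]] := R_mul_eq_of_valuation_le hxk hc0 hle.
have hbx : P (b * x ^+ k) by rewrite eab; exact: (idealMl hPi ha hc).
case: (hPp _ _ hb hxk hbx) => [/sub [_ /(_ hb0)]|]; first by rewrite hvb ltxx.
exact: (prime_ideal_pow subring_R hP hx hk).
Qed.

Lemma dim_one_R : dim_one R.
Proof.
split; first by exists PiR; split; [exact: prime_PiR | exists pi; split; [exact: PiR_pi | exact: pi_neq0]].
move=> P hP hnz; have [[hPi hP1] _] := hP.
by case: (R_proper_ideal_sub hPi hP1) => sub; [exact: prime_sub_MR_maximal | exact: prime_sub_PiR_maximal].
Qed.

Lemma prime_R_assoc_pi p : prime_elt R p -> assoc_in R p pi.
Proof.
move=> hpp; have hP := principal_prime subring_R hpp.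
have [hp hp0 _ _] := hpp.
have pp : principal R p p := principal_self subring_R p.
have [_ _ hpiV] := pi_unit_D.
have hmax : maximal_ideal R (principal R p) by case: dim_one_R => _; apply=> //; exists p.
case: (maximal_R_cases hmax) => hs.
  (* then [M = p D], so that [D] would be a UFD *)
  exfalso; apply/nU/(principal_max_UFD sD nD Mmax Muniq hp0) => x; split.
    by case=> d hd ->; exact: (idealMr hM hd (proj2 (proj1 (hs p) pp))).
  move=> hMx; have [n hn] := D_pi_pow_R (ideal_sub hM hMx).
  have [c hc ec] := proj2 (hs _) (conj hn (idealMl hM (subringX sD n (proj1 pi_R)) hMx)).
  exists (c * pi^-1 ^+ n); first exact: (subringM sD (proj1 hc) (subringX sD n hpiV)).
  have hpn0 : pi ^+ n != 0 by rewrite expf_neq0 // pi_neq0.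
  by rewrite mulrA -ec exprVn mulrAC mulfV // mul1r.
have [c hc ec] := proj2 (hs pi) PiR_pi.
have [_ /(_ hp0) hvp] := proj1 (hs p) pp.
have hqR := R_div_pi hp hp0 hvp.
exists (p / pi); split; last by rewrite divfK ?pi_neq0.
by apply: (unit_in_mul1 hqR hc); rewrite mulrAC -ec mulfV ?pi_neq0.
Qed.

Lemma irreducible_R_notin_PiR r : irreducible_in R r -> ~ assoc_in R r pi -> ~ PiR r.
Proof.
move=> [hr hr0 _ hirr] hna [_ /(_ hr0) hvr].
have hqR := R_div_pi hr hr0 hvr.
case: (hirr _ _ pi_R hqR); first by rewrite mulrC divfK ?pi_neq0.
  by have [_ _ hpu _] := pR.
by move=> hu; apply: hna; exists (r / pi); split; last by rewrite divfK ?pi_neq0.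
Qed.

Lemma abs_irreducible_R_principal r : irreducible_in R r -> ~ assoc_in R r pi ->
  abs_irreducible R r -> same_set (principal D r) M.
Proof.
move=> hirr hna habs; have [hr hr0 hru _] := hirr.
have [_ hvr] := R_notin_PiR hr (irreducible_R_notin_PiR hirr hna).
have hMr : M r.
  apply: NNPP => hMr; apply/hru/unit_R; split=> //.
  exact: (notin_max_unit sD nD Muniq (proj1 hr) hMr).
(* a power of [r] lies in [w D]; normalized into [R], the cofactor divides a power of [r] *)
have pow w : D w -> w != 0 -> exists u j, unit_in D u /\ w = u * r ^+ j.
  move=> hw hw0.
  have [k [d hd ek]] := max_pow_principal sD nD Muniq dD hMr hw hw0.
  have [e [he hve]] := D_normalize hw0; have [heD he0 heV] := he.
  have hx0 : w * e != 0 by rewrite mulf_neq0.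
  have hxR : R (w * e).
    by split; [exact: (subringM sD hw heD) | apply/(V_valuation hx0); rewrite hve].
  have hrk0 : r ^+ k != 0 by rewrite expf_neq0.
  have hd0 : d != 0 by apply: contraNneq hrk0 => d0; rewrite ek d0 mulr0.
  have hy0 : d / e != 0 by rewrite mulf_neq0 ?invr_neq0.
  have exy : (w * e) * (d / e) = r ^+ k by rewrite ek; field.
  have hyR : R (d / e).
    split; first exact: (subringM sD hd heV).
    have := vM hx0 hy0; rewrite exy (valuationX vM) // hvr mul0r hve => h.
    by apply/(V_valuation hy0); lia.
  have [u [j [hu eu]]] := abs_irreducible_dvd_pow subring_R
    (noetherian_atomic subring_R noetherian_R) habs hxR hyR exy.
  have [huD _] := proj1 (unit_R u) hu.
  exists (u / e), j; split; first exact: (unit_inM sD huD (unit_inV he)).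
  by rewrite -[w](mulfK he0) eu; field.
move=> x; split=> [[d hd ->]|hMx]; first exact: (idealMr hM hd hMr).
have [->|hx0] := eqVneq x 0; first by exists 0; [exact: (subring0 sD) | rewrite mulr0].
have [u [[|j] [hu eu]]] := pow x (ideal_sub hM hMx) hx0.
  by case: (unit_notin_max Mmax hu); rewrite -[u]mulr1 -(expr0 r) -eu.
have [huD _ _] := hu.
exists (u * r ^+ j); first exact: (subringM sD huD (subringX sD j (proj1 hr))).
by rewrite eu exprS; ring.
Qed.

Lemma not_abs_irreducible_R r : irreducible_in R r -> ~ assoc_in R r pi ->
  ~ abs_irreducible R r.
Proof.
move=> hirr hna habs; have [_ hr0 _ _] := hirr.
exact/nU/(principal_max_UFD sD nD Mmax Muniq hr0)/abs_irreducible_R_principal.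
Qed.

Lemma intersection_structure :
  [/\ noetherian R /\ dim_one R /\ atomic R,
      exists M1 M2, [/\ maximal_ideal R M1, maximal_ideal R M2, ~ same_set M1 M2 &
         forall N, maximal_ideal R N -> same_set N M1 \/ same_set N M2],
      prime_elt R pi /\ (forall p, prime_elt R p -> assoc_in R p pi) &
      forall r, irreducible_in R r -> ~ assoc_in R r pi -> ~ abs_irreducible R r].
Proof.
split.
- by split; [exact: noetherian_R | split; [exact: dim_one_R | exact: (noetherian_atomic subring_R noetherian_R)]].
- exists MR, PiR; split; [exact: maximal_MR | exact: maximal_PiR | | exact: maximal_R_cases].
  by have [t [hMt hPt]] := exists_MR_notin_PiR; move/(_ t) => /iffLR /(_ hMt).
- by split; [exact: pR | exact: prime_R_assoc_pi].
- exact: not_abs_irreducible_R.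
Qed.

End Intersection.

Theorem mainTheorem7 (L : fieldType) (D V : L -> Prop) (pi : L) :
  subring D -> subring V ->
  quotient_field_is D -> quotient_field_is V ->
  noetherian D -> local_ring D -> dim_one D ->
  noetherian V -> local_ring V -> dim_one V ->
  (* (a) *) DVR_of V ->
  (* (b) *) prime_elt V pi -> prime_elt (capS D V) pi ->
  (* (c) *) (forall N, maximal_ideal (int_closure D) N ->
             independent (localization (int_closure D) N) V) ->
  (* (d) *) ~ UFD D ->
  (* (e) *) (exists a b, [/\ irreducible_in D a, irreducible_in D b,
                            irreducible_in (capS D V) a, irreducible_in (capS D V) b &
                            ~ assoc_in D a b]) ->
  let R := capS D V in
  [/\ noetherian R /\ dim_one R /\ atomic R,
      (exists M1 M2, [/\ maximal_ideal R M1, maximal_ideal R M2, ~ same_set M1 M2 &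
         forall M, maximal_ideal R M -> same_set M M1 \/ same_set M M2]),
      prime_elt R pi /\ (forall p, prime_elt R p -> assoc_in R p pi),
      (exists r, irreducible_in R r /\ ~ assoc_in R r pi) &
      (forall r, irreducible_in R r -> ~ assoc_in R r pi -> ~ abs_irreducible R r)].
Proof.
move=> sD sV qD _ nD [M [Mmax Muniq]] dD _ _ _ [v [vM vA vS Vv]] pV pR _ nU
  [a [b [_ _ ha hb nab]]] R.
have [hnda hmax hprime hnabs] :=
  intersection_structure sD sV qD nD dD Mmax Muniq vM vA vS Vv pV pR nU.
split=> //.
(* [a] and [b] are not both associated to [pi] in [R], since they are not associated in [D] *)
have [hapi|] := classic (assoc_in R a pi); last by exists a.
have [hbpi|] := classic (assoc_in R b pi); last by exists b.
have RD z : R z -> D z by case.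
by case: nab; apply: (assoc_inW RD); exact: (assoc_in_trans (subring_R sD sV) hapi (assoc_in_sym hbpi)).
Qed.
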